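(* Let $\mathcal{F}$ be a finite family of constraints and $\mathcal{F}^\perp=\{g^\perp\mid g\in\mathcal{F}\}$. If $\mathcal{F}^\perp$ pins $\ell_0$ then $\mathcal{F}$ pins $\ell_0$. If $\mathcal{F}$ pins $\ell_0$ and no four constraints in $\mathcal{F}$ are dependent, then $\mathcal{F}^\perp$ pins $\ell_0$.
   Context: All lines are oriented. For non-parallel oriented lines $\ell_1,\ell_2$ with directions $d_1,d_2$, $\ell_2$ passes to the right of $\ell_1$ if $\ell_2$ can be translated by a positive multiple of $d_1\times d_2$ to meet $\ell_1$. Coordinates are chosen so that $\ell_0$ is the $z$-axis. A constraint is an oriented line meeting $\ell_0$ in exactly one point; a line satisfies a constraint $g$ if it meets $g$ or passes to the right of $g$. A family of constraints pins $\ell_0$ if there is a neighborhood of $\ell_0$ in the space of oriented lines in which $\ell_0$ is the only line satisfying all its constraints. $g(\lambda,\alpha,\delta)$ denotes the constraint through $(0,0,\lambda)$ and $(\cos\alpha,\sin\alpha,\lambda+\delta)$, oriented from the first to the second point (every constraint has this form). The orthogonalized constraint of $g=g(\lambda,\alpha,\delta)$ is $g^\perp=g(\lambda,\alpha,0)$ (the projection of $g$ onto the plane orthogonal to $\ell_0$ through $g\cap\ell_0$). The normal of $g(\lambda,\alpha,\delta)$ is $\eta_g=\big((1-\lambda)\sin\alpha,-(1-\lambda)\cos\alpha,\lambda\sin\alpha,-\lambda\cos\alpha\big)$; a family of constraints is dependent if their normals are linearly dependent. *)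

From Stdlib Require Import Reals List.
Open Scope R_scope.

Record vec3 := V3 { vx : R; vy : R; vz : R }.

Definition vadd (a b : vec3) : vec3 := V3 (vx a + vx b) (vy a + vy b) (vz a + vz b).
Definition vscale (c : R) (a : vec3) : vec3 := V3 (c * vx a) (c * vy a) (c * vz a).
Definition cross (a b : vec3) : vec3 :=
  V3 (vy a * vz b - vz a * vy b) (vz a * vx b - vx a * vz b) (vx a * vy b - vy a * vx b).

(* An oriented line is represented by a point and a nonzero direction vector;
   two representations denote the same oriented line iff [same_oline]. *)
Record oline := OLine { lpt : vec3; ldir : vec3 }.

Definition same_oline (l1 l2 : oline) : Prop :=
  (exists c, 0 < c /\ ldir l2 = vscale c (ldir l1)) /\
  (exists t, lpt l2 = vadd (lpt l1) (vscale t (ldir l1))).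

Definition parallel (l1 l2 : oline) : Prop := cross (ldir l1) (ldir l2) = V3 0 0 0.

Definition meets (l1 l2 : oline) : Prop :=
  exists t u, vadd (lpt l1) (vscale t (ldir l1)) = vadd (lpt l2) (vscale u (ldir l2)).

Definition passes_right (l2 l1 : oline) : Prop :=
  ~ parallel l1 l2 /\
  exists s, 0 < s /\
    meets (OLine (vadd (lpt l2) (vscale s (cross (ldir l1) (ldir l2)))) (ldir l2)) l1.

Definition l0 : oline := OLine (V3 0 0 0) (V3 0 0 1).

(* Constraint parameters (lambda, alpha, delta). *)
Definition cparams := (R * R * R)%type.

Definition gline (g : cparams) : oline :=
  let '(lam, al, de) := g in OLine (V3 0 0 lam) (V3 (cos al) (sin al) de).

Definition satisfies (l : oline) (g : cparams) : Prop :=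
  meets l (gline g) \/ passes_right l (gline g).

Definition orth (g : cparams) : cparams := let '(lam, al, _) := g in (lam, al, 0).

Definition normal (g : cparams) : R * R * R * R :=
  let '(lam, al, _) := g in
  ((1 - lam) * sin al, - (1 - lam) * cos al, lam * sin al, - lam * cos al).

Definition indep4 (a b c d : R * R * R * R) : Prop :=
  forall k1 k2 k3 k4 : R,
    (let '(a1, a2, a3, a4) := a in let '(b1, b2, b3, b4) := b in
     let '(c1, c2, c3, c4) := c in let '(d1, d2, d3, d4) := d in
     k1 * a1 + k2 * b1 + k3 * c1 + k4 * d1 = 0 /\
     k1 * a2 + k2 * b2 + k3 * c2 + k4 * d2 = 0 /\
     k1 * a3 + k2 * b3 + k3 * c3 + k4 * d3 = 0 /\
     k1 * a4 + k2 * b4 + k3 * c4 + k4 * d4 = 0) ->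
    k1 = 0 /\ k2 = 0 /\ k3 = 0 /\ k4 = 0.

(* Neighborhoods of l0 are described through representatives
   (p, d) with p near 0 and d near e3 (the quotient map to oriented lines is open). *)
Definition pins (F : list cparams) : Prop :=
  exists eps, 0 < eps /\
    forall p d : vec3,
      Rabs (vx p) < eps -> Rabs (vy p) < eps -> Rabs (vz p) < eps ->
      Rabs (vx d) < eps -> Rabs (vy d) < eps -> Rabs (vz d - 1) < eps ->
      (forall g, In g F -> satisfies (OLine p d) g) ->
      same_oline (OLine p d) l0.

Definition no_four_dependent (F : list cparams) : Prop :=
  forall g1 g2 g3 g4, In g1 F -> In g2 F -> In g3 F -> In g4 F ->
    ~ same_oline (gline g1) (gline g2) -> ~ same_oline (gline g1) (gline g3) ->
    ~ same_oline (gline g1) (gline g4) -> ~ same_oline (gline g2) (gline g3) ->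
    ~ same_oline (gline g2) (gline g4) -> ~ same_oline (gline g3) (gline g4) ->
    indep4 (normal g1) (normal g2) (normal g3) (normal g4).

(* In the chart where a line near l0 is given by its points (x0, y0, 0) and
   (x1, y1, 1), a line satisfies g iff L_g(v) + delta_g Q(v) <= 0, where L_g is
   the linear form with coefficients eta_g and Q(v) = y0 x1 - x0 y1; the
   orthogonalized constraint is just L_g(v) <= 0.  If the linear constraints
   alone pin l0, compactness of the unit sphere gives max_g L_g(v) >= c |v|,
   which beats the quadratic terms near 0.  Conversely, if L_g(v) <= 0 for all
   g and some v <> 0, then the curve t v + t^2 w escapes l0 inside the
   feasible region, provided the constraints tight at v become strictly negative
   at order t^2: this linear system in w is solvable because any four
   constraints with distinct lines have independent normals.  Families with at
   most three distinct lines never pin l0. *)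

From Stdlib Require Import Reals List Lra Psatz Classical.
From mathcomp Require all_boot all_order all_algebra all_classical all_reals all_analysis ring Rstruct Rstruct_topology.
Open Scope R_scope.

Definition dot4 (a : R * R * R * R) (x0 y0 x1 y1 : R) : R :=
  let '(a1, a2, a3, a4) := a in a1 * x0 + a2 * y0 + a3 * x1 + a4 * y1.

(** * Linear forms on R^4 *)

Module LinearForms.

Import all_boot all_order all_algebra all_classical all_reals all_analysis ring Rstruct Rstruct_topology.
Import Order.TTheory GRing.Theory Num.Theory.
Import numFieldNormedType.Exports.

Section Homogeneous.
Local Open Scope classical_set_scope.
Local Open Scope ring_scope.
Context {R : realType} {n : nat}.
Implicit Types (v : 'rV[R]_n.+1) (f : 'rV[R]_n.+1 -> R).

Definition pos_homogeneous f := forall k v, 0 <= k -> f (k *: v) = k * f v.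

Lemma norm_coord_le v i : `|v ord0 i| <= `|v|.
Proof.
have /mapP[j _ ->] : `|v ord0 i| \in [seq `|v x.1 x.2| | x : 'I_1 * 'I_n.+1].
  by apply/mapP; exists (ord0, i) => //=; rewrite mem_enum.
by rewrite [leRHS]/Num.Def.normr /= mx_normrE; apply/bigmax_geP; right; exists j.
Qed.

Lemma normalize_norm v : v != 0 -> `| `|v|^-1 *: v | = 1.
Proof. by move=> v0; rewrite normrZ normrV ?unitfE ?normr_eq0 // normr_id mulVf ?normr_eq0. Qed.

(* [c] is the minimum of [f] on the compact unit sphere. *)
Lemma homogeneous_coercive f : continuous f -> pos_homogeneous f ->
  (forall v, v != 0 -> 0 < f v) -> exists2 c, 0 < c & forall v, c * `|v| <= f v.
Proof.
move=> fC fZ fpos.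
pose S := [set v : 'rV[R]_n.+1 | `|v| = 1].
have S_compact : compact S.
  apply: bounded_closed_compact.
    by exists 1; split => // M M1 x /= ->; exact: ltW.
  apply: (@preimage_closed _ _ (fun v : 'rV[R]_n.+1 => `|v|) [set 1]).
    by move=> x _; apply: norm_continuous.
  exact: closed_eq.
have one_neq0 : (const_mx 1 : 'rV[R]_n.+1) != 0.
  by apply/eqP => /matrixP/(_ ord0 ord0); rewrite !mxE; apply/eqP; exact: oner_neq0.
have S0 : S !=set0 by exists (`|const_mx 1 : 'rV[R]_n.+1|^-1 *: const_mx 1); exact: normalize_norm.
have [u uS umin] := compact_EVT_min S0 S_compact (continuous_subspaceT fC).
have u0 : u != 0 by apply: contraPneq uS => ->; rewrite inE /S /= normr0 => /esym/eqP; rewrite oner_eq0.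
exists (f u); first exact: fpos.
move=> v; have [->|v0] := eqVneq v 0.
  by rewrite normr0 mulr0 -(scale0r (0 : 'rV[R]_n.+1)) fZ // mul0r.
have := umin _ (mem_set (normalize_norm _ v0)); rewrite fZ ?invr_ge0 //.
by rewrite -ler_pdivlMr ?normr_gt0 // mulrC.
Qed.

Fixpoint maxf {I : Type} (f : I -> 'rV[R]_n.+1 -> R) (i0 : I) (s : seq I) v : R :=
  if s is i :: s' then Num.max (f i v) (maxf f i0 s' v) else f i0 v.

Section MaxOfFamily.
Variables (I : Type) (f : I -> 'rV[R]_n.+1 -> R) (i0 : I).

Lemma maxf_continuous s : (forall i, continuous (f i)) -> continuous (maxf f i0 s).
Proof.
move=> fC; elim: s => [|i s IH] //= v.
by apply: (@continuous_max _ _ (f i) (maxf f i0 s)); [exact: fC|exact: IH].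
Qed.

Lemma maxf_homogeneous s : (forall i, pos_homogeneous (f i)) -> pos_homogeneous (maxf f i0 s).
Proof. by move=> fZ; elim: s => [|i s IH] //= k v k0; rewrite IH ?fZ ?maxr_pMr. Qed.

Lemma maxf_attained s v : exists2 i, List.In i (i0 :: s) & maxf f i0 s v = f i v.
Proof.
elim: s => [|i s [j j_in IH]] /=; first by exists i0; [left|].
case: (leP (f i v) (maxf f i0 s v)) => _; last by exists i; [right; left|].
by exists j => //; case: j_in => [<-|]; [left|right; right].
Qed.

Lemma maxf_ge s v i : List.In i (i0 :: s) -> f i v <= maxf f i0 s v.
Proof.
elim: s => [|j s IH] /=; first by case=> [->|[]].
rewrite le_max => -[i0i|[ji|i_s]]; apply/orP.
- by right; apply: IH; left.
- by left; rewrite ji.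
- by right; apply: IH; right.
Qed.

End MaxOfFamily.
End Homogeneous.

Section Forms4.
Local Open Scope ring_scope.
Context {R : realType}.
Implicit Types (a : R * R * R * R) (v : 'rV[R]_4).

Definition vec4 a : 'rV[R]_4 := let '(a1, a2, a3, a4) := a in \row_j [:: a1; a2; a3; a4]`_j.

Definition form a v : R :=
  let '(a1, a2, a3, a4) := a in (a1 * v ord0 0 + a2 * v ord0 1 + a3 * v ord0 2 + a4 * v ord0 3)%R.

Definition coords4 v : R * R * R * R := (v ord0 0, v ord0 1, v ord0 2, v ord0 3).

Lemma vec4K : cancel vec4 coords4.
Proof. by case=> [[[a1 a2] a3] a4]; rewrite /coords4 !mxE. Qed.

Lemma coords4K : cancel coords4 vec4.
Proof.
move=> v; apply/rowP => -[[|[|[|[|j]]]] lt_j4]; rewrite mxE //=.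
all: by congr (v ord0 _); apply: val_inj.
Qed.

Lemma form_continuous a : continuous (form a).
Proof.
case: a => [[[a1 a2] a3] a4] v.
have coordC (k : R) (i : 'I_4) : {for v, continuous (fun w : 'rV[R]_4 => k * w ord0 i)}.
  apply: (@continuousM _ _ (fun=> k) (fun w : 'rV[R]_4 => w ord0 i)).
    exact: cst_continuous.
  exact: coord_continuous.
rewrite /form /=.
apply: (@continuousD _ _ _ (fun w : 'rV[R]_4 => a1 * w ord0 0 + a2 * w ord0 1 + a3 * w ord0 2)
  (fun w => a4 * w ord0 3)) => //.
apply: (@continuousD _ _ _ (fun w : 'rV[R]_4 => a1 * w ord0 0 + a2 * w ord0 1)
  (fun w => a3 * w ord0 2)) => //.
exact: (@continuousD _ _ _ (fun w : 'rV[R]_4 => a1 * w ord0 0) (fun w => a2 * w ord0 1)).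
Qed.

Lemma form_homogeneous a : pos_homogeneous (form a).
Proof. by case: a => [[[a1 a2] a3] a4] k v _; rewrite /form !mxE /=; ring. Qed.

Lemma sum4 (f : 'I_4 -> R) : \sum_i f i = f 0 + f 1 + f 2 + f 3.
Proof. by rewrite !big_ord_recl big_ord0 addr0 !addrA; congr (_ + _ + _ + _); congr f; apply: val_inj. Qed.

Definition rows4 a b c d : 'M[R]_4 := \matrix_(i < 4) [:: vec4 a; vec4 b; vec4 c; vec4 d]`_i.

Lemma rows4_mulmx a b c d v :
  rows4 a b c d *m v^T = (vec4 (form a v, form b v, form c v, form d v))^T.
Proof.
case: a b c d => [[[a1 a2] a3] a4] [[[b1 b2] b3] b4] [[[c1 c2] c3] c4] [[[d1 d2] d3] dot4].
by apply/colP => -[[|[|[|[|i]]]] lt_i4] //; rewrite !mxE sum4 !mxE.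
Qed.

End Forms4.

Section Independence.
Local Open Scope ring_scope.

Lemma row_free_of_left_kernel (F : fieldType) m n (M : 'M[F]_(m, n)) :
  (forall u : 'rV_m, u *m M = 0 -> u = 0) -> row_free M.
Proof. by move=> Mker; rewrite -kermx_eq0; apply/rowV0P => u /sub_kermxP; exact: Mker. Qed.

Lemma indep4_unitmx a b c d : indep4 a b c d -> rows4 a b c d \in unitmx.
Proof.
move=> ind; rewrite -row_free_unit; apply: row_free_of_left_kernel => k kM0.
have e j : \sum_i k ord0 i * rows4 a b c d i j = 0 by move/rowP: kM0 => /(_ j); rewrite !mxE.
move: (e 0) (e 1) (e 2) (e 3) => {e kM0}; rewrite !sum4 !mxE.
case: a b c d ind => [[[a1 a2] a3] a4] [[[b1 b2] b3] b4] [[[c1 c2] c3] c4] [[[d1 d2] d3] dot4] ind.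
rewrite !mxE => e0 e1 e2 e3.
have [k0 [k1 [k2 k3]]] := ind _ _ _ _ (conj e0 (conj e1 (conj e2 e3))).
rewrite -[k]coords4K /coords4 k0 k1 k2 k3.
by apply/rowP => -[[|[|[|[|j]]]] ?]; rewrite !mxE.
Qed.

End Independence.

Lemma formE a v : form a v = dot4 a (v ord0 0%R) (v ord0 1%R) (v ord0 2%R) (v ord0 3%R).
Proof. by case: a => [[[a1 a2] a3] a4]. Qed.

Lemma form_vec4 a x0 y0 x1 y1 : form a (vec4 (x0, y0, x1, y1)) = dot4 a x0 y0 x1 y1.
Proof. by rewrite formE !mxE. Qed.

Lemma vec40 : vec4 (0, 0, 0, 0) = 0%R.
Proof. by apply/rowP => -[[|[|[|[|j]]]] ?]; rewrite !mxE. Qed.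

Lemma indep4_injective a b c d x0 y0 x1 y1 : indep4 a b c d ->
  dot4 a x0 y0 x1 y1 = 0 -> dot4 b x0 y0 x1 y1 = 0 -> dot4 c x0 y0 x1 y1 = 0 -> dot4 d x0 y0 x1 y1 = 0 ->
  x0 = 0 /\ y0 = 0 /\ x1 = 0 /\ y1 = 0.
Proof.
move=> /indep4_unitmx uM ha hb hc hd.
have: (rows4 a b c d *m (vec4 (x0, y0, x1, y1))^T = 0)%R.
  by rewrite rows4_mulmx !form_vec4 ha hb hc hd vec40 trmx0.
move/(congr1 (mulmx (invmx (rows4 a b c d)))); rewrite mulKmx // mulmx0.
by move/(congr1 trmx); rewrite trmxK trmx0 -vec40 => /(can_inj vec4K) [-> -> -> ->].
Qed.

Lemma indep4_surjective a b c d : indep4 a b c d -> forall c1 c2 c3 c4 : R,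
  exists x0 y0 x1 y1, dot4 a x0 y0 x1 y1 = c1 /\ dot4 b x0 y0 x1 y1 = c2 /\
    dot4 c x0 y0 x1 y1 = c3 /\ dot4 d x0 y0 x1 y1 = c4.
Proof.
move=> /indep4_unitmx uM c1 c2 c3 c4.
pose v := (invmx (rows4 a b c d) *m (vec4 (c1, c2, c3, c4))^T)^T%R.
have: (rows4 a b c d *m v^T = (vec4 (c1, c2, c3, c4))^T)%R by rewrite trmxK mulKVmx.
rewrite rows4_mulmx => /trmx_inj /(can_inj vec4K) [<- <- <- <-].
by exists (v ord0 0%R), (v ord0 1%R), (v ord0 2%R), (v ord0 3%R); rewrite !formE.
Qed.

Lemma forms_coercive (l : list (R * R * R * R)) :
  (forall x0 y0 x1 y1, ~ (x0 = 0 /\ y0 = 0 /\ x1 = 0 /\ y1 = 0) ->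
     exists a, In a l /\ 0 < dot4 a x0 y0 x1 y1) ->
  exists c, 0 < c /\ forall x0 y0 x1 y1, exists a, In a l /\
    c * Rabs x0 <= dot4 a x0 y0 x1 y1 /\ c * Rabs y0 <= dot4 a x0 y0 x1 y1 /\
    c * Rabs x1 <= dot4 a x0 y0 x1 y1 /\ c * Rabs y1 <= dot4 a x0 y0 x1 y1.
Proof.
case: l => [|a0 l'] pos; first by have [a [[] _]] := pos 1 0 0 0 ltac:(case; lra).
have [c c_gt0 c_le] : exists2 c, (0 < c)%R & forall v, (c * `|v| <= maxf form a0 l' v)%R.
  apply: homogeneous_coercive.
  - exact/maxf_continuous/form_continuous.
  - exact/maxf_homogeneous/form_homogeneous.
  move=> v v_neq0.
  have [|a [a_l /RltP a_pos]] := pos (v ord0 0%R) (v ord0 1%R) (v ord0 2%R) (v ord0 3%R).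
    move=> [e0 [e1 [e2 e3]]]; move/eqP: v_neq0; apply.
    by rewrite -[v]coords4K /coords4 e0 e1 e2 e3 vec40.
  apply: (lt_le_trans a_pos); rewrite -formE.
  exact: maxf_ge.
exists c; split; first exact/RltP.
move=> x0 y0 x1 y1; set v := vec4 (x0, y0, x1, y1).
have [a a_l maxfE] := maxf_attained _ form a0 l' v.
exists a; split => //.
have := c_le v; rewrite maxfE formE !mxE /= => le_norm.
have coord_le i : (c * `|v ord0 i| <= dot4 a x0 y0 x1 y1)%R.
  apply: le_trans le_norm.
  by rewrite ler_pM2l // norm_coord_le.
move: (coord_le 0%R) (coord_le 1%R) (coord_le 2%R) (coord_le 3%R); rewrite !mxE /=.
by move=> /RleP ? /RleP ? /RleP ? /RleP ?.
Qed.

End LinearForms.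

(** * Satisfying a constraint as a sign condition *)

Definition dot (a b : vec3) : R := vx a * vx b + vy a * vy b + vz a * vz b.
Definition vsub (a b : vec3) : vec3 := V3 (vx a - vx b) (vy a - vy b) (vz a - vz b).

Definition cpoint (g : cparams) : vec3 := let '(lam, _, _) := g in V3 0 0 lam.
Definition cdir (g : cparams) : vec3 := let '(_, al, de) := g in V3 (cos al) (sin al) de.
Definition cdelta (g : cparams) : R := let '(_, _, de) := g in de.

(* A line with direction d satisfies g iff [side p d g <= 0], provided it is
   not parallel to g: passing to the right of g means translating by a positive
   multiple of [cdir g x d] decreases the triple product to zero. *)
Definition side (p d : vec3) (g : cparams) : R := dot (vsub p (cpoint g)) (cross (cdir g) d).

Lemma gline_eq g : gline g = OLine (cpoint g) (cdir g).
Proof. now destruct g as [[l a] e]. Qed.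

Lemma vec3_eq_coords a b : a = b -> vx a = vx b /\ vy a = vy b /\ vz a = vz b.
Proof. now intros ->. Qed.

Lemma dot_self_pos n : n <> V3 0 0 0 -> 0 < dot n n.
Proof.
destruct n as [n1 n2 n3]; unfold dot; simpl; intros Hn.
destruct (Req_dec n1 0), (Req_dec n2 0), (Req_dec n3 0); subst; try nra.
now exfalso; apply Hn.
Qed.

Lemma meets_side p d g : meets (OLine p d) (gline g) -> side p d g = 0.
Proof.
rewrite gline_eq; intros [t [u H]]; apply vec3_eq_coords in H.
destruct p as [px py pz], d as [dx dy dz], g as [[l a] e]; simpl in *.
destruct H as [h1 [h2 h3]].
replace px with (u * cos a - t * dx) by lra.
replace py with (u * sin a - t * dy) by lra.
replace pz with (l + u * e - t * dz) by lra.
unfold side, dot, vsub, cross; simpl; ring.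
Qed.

Lemma satisfies_side p d g : satisfies (OLine p d) g -> side p d g <= 0.
Proof.
intros [H|[Hnp [s [Hs H]]]]; [rewrite (meets_side _ _ _ H); lra|].
rewrite gline_eq in H, Hnp; destruct H as [t [u H]]; apply vec3_eq_coords in H.
unfold parallel in Hnp; simpl in Hnp, H.
destruct p as [px py pz], d as [dx dy dz], g as [[l a] e]; simpl in *.
destruct H as [h1 [h2 h3]].
replace px with (u * cos a - t * dx - s * (sin a * dz - e * dy)) by lra.
replace py with (u * sin a - t * dy - s * (e * dx - cos a * dz)) by lra.
replace pz with (l + u * e - t * dz - s * (cos a * dy - sin a * dx)) by lra.
assert (Hn := dot_self_pos _ Hnp); unfold side, dot, vsub, cross in *; simpl in *; nra.
Qed.

Lemma coplanar_decomp (w e d : vec3) : cross e d <> V3 0 0 0 -> dot w (cross e d) = 0 ->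
  exists al be, vx w = al * vx e + be * vx d /\ vy w = al * vy e + be * vy d /\
    vz w = al * vz e + be * vz d.
Proof.
intros Hn Hw; assert (HN := dot_self_pos _ Hn); set (N := dot (cross e d) (cross e d)) in *.
exists (dot (cross w d) (cross e d) / N), (dot (cross e w) (cross e d) / N).
assert (I : forall k : vec3 -> R, k = vx \/ k = vy \/ k = vz ->
  k w * N = dot (cross w d) (cross e d) * k e + dot (cross e w) (cross e d) * k d
            + dot w (cross e d) * k (cross e d)).
{ intros k [ -> | [ -> | -> ] ]; destruct w, e, d; unfold N, dot, cross; simpl; ring. }
rewrite Hw in I.
repeat split; apply (Rmult_eq_reg_r N); try lra;
  [rewrite (I vx)|rewrite (I vy)|rewrite (I vz)]; auto; field; lra.
Qed.

Lemma side_satisfies p d g :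
  cross (cdir g) d <> V3 0 0 0 -> side p d g <= 0 -> satisfies (OLine p d) g.
Proof.
intros Hn HT; assert (HN := dot_self_pos _ Hn); unfold satisfies; rewrite gline_eq.
set (s := - side p d g / dot (cross (cdir g) d) (cross (cdir g) d)).
assert (Hw : side (vadd p (vscale s (cross (cdir g) d))) d g = 0).
{ unfold s, side; destruct p, d, g as [[l a] e]; unfold dot, vsub, vadd, vscale, cross in *; simpl in *.
  field; lra. }
assert (on_plane : forall q, side q d g = 0 -> meets (OLine q d) (OLine (cpoint g) (cdir g))).
{ intros q Hq; destruct (coplanar_decomp _ _ _ Hn Hq) as [al [be [h1 [h2 h3]]]].
  exists (- be), al; destruct q, d, g as [[l a] e]; unfold vadd, vscale, vsub in *; simpl in *.
  f_equal; lra. }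
destruct (Req_dec (side p d g) 0) as [H0|H0]; [left; auto|right].
split; [exact Hn|]; exists s; split; [unfold s; apply Rdiv_lt_0_compat; lra|].
now apply on_plane.
Qed.

(** * A chart around l0 *)

(* Coordinates (x0, y0, x1, y1) stand for the line through (x0, y0, 0) and
   (x1, y1, 1). *)
Definition lform (g : cparams) (x0 y0 x1 y1 : R) : R := dot4 (normal g) x0 y0 x1 y1.
Definition qform (x0 y0 x1 y1 : R) : R := y0 * x1 - x0 * y1.
Definition cform (g : cparams) (x0 y0 x1 y1 : R) : R :=
  lform g x0 y0 x1 y1 + cdelta g * qform x0 y0 x1 y1.

Lemma side_chart g x0 y0 x1 y1 :
  side (V3 x0 y0 0) (V3 (x1 - x0) (y1 - y0) 1) g = cform g x0 y0 x1 y1.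
Proof.
destruct g as [[l a] e].
unfold side, cform, lform, qform, dot4, normal, dot, vsub, cross; simpl; ring.
Qed.

(* Chart coordinates of the line (p, d): its points at heights 0 and 1. *)
Definition chart_x0 (p d : vec3) : R := vx p - vz p * vx d / vz d.
Definition chart_y0 (p d : vec3) : R := vy p - vz p * vy d / vz d.
Definition chart_x1 (p d : vec3) : R := chart_x0 p d + vx d / vz d.
Definition chart_y1 (p d : vec3) : R := chart_y0 p d + vy d / vz d.

Lemma side_chart_coords p d g : vz d <> 0 ->
  side p d g = vz d * cform g (chart_x0 p d) (chart_y0 p d) (chart_x1 p d) (chart_y1 p d).
Proof.
intros Hz; destruct g as [[l a] e], p, d.
unfold side, cform, lform, qform, dot4, normal, dot, vsub, cross, chart_x1, chart_y1, chart_x0, chart_y0;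
  simpl in *; field; auto.
Qed.

Definition pins_chart (F : list cparams) : Prop :=
  exists eps, 0 < eps /\ forall x0 y0 x1 y1,
    Rabs x0 < eps -> Rabs y0 < eps -> Rabs x1 < eps -> Rabs y1 < eps ->
    (forall g, In g F -> cform g x0 y0 x1 y1 <= 0) -> x0 = 0 /\ y0 = 0 /\ x1 = 0 /\ y1 = 0.

Lemma bounded_on_list {A : Type} (f : A -> R) (l : list A) :
  exists D, 0 <= D /\ forall a, In a l -> Rabs (f a) <= D.
Proof.
induction l as [|a l [D [HD IH]]]; [exists 0; split; [lra|intros _ []]|].
exists (Rabs (f a) + D); split; [pose proof (Rabs_pos (f a)); lra|].
intros b [<-|Hb]; [lra|]; pose proof (Rabs_pos (f a)); specialize (IH b Hb); lra.
Qed.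

Lemma cross_dir_nonzero g u v :
  cdelta g ^ 2 * (u ^ 2 + v ^ 2) < 1 -> cross (cdir g) (V3 u v 1) <> V3 0 0 0.
Proof.
destruct g as [[l a] e]; simpl; intros H E; injection E; intros h3 h2 h1.
pose proof (sin2_cos2 a) as S; unfold Rsqr in S.
replace (sin a) with (e * v) in S by lra; replace (cos a) with (e * u) in S by lra; nra.
Qed.

Lemma same_oline_l0_chart x0 y0 x1 y1 :
  same_oline (OLine (V3 x0 y0 0) (V3 (x1 - x0) (y1 - y0) 1)) l0 ->
  x0 = 0 /\ y0 = 0 /\ x1 = 0 /\ y1 = 0.
Proof.
intros [[c [Hc Ec]] [t Et]]; simpl in Ec, Et.
apply vec3_eq_coords in Ec; apply vec3_eq_coords in Et; unfold vscale, vadd in *; simpl in *.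
destruct Ec as [c1 [c2 c3]], Et as [t1 [t2 t3]].
assert (c = 1) by lra; assert (t = 0) by lra; subst c t; lra.
Qed.

Lemma small_product a u D e : 0 < e -> Rabs a <= D -> Rabs u < 2 * e -> e * (4 * (1 + D)) <= 1 ->
  a ^ 2 * u ^ 2 < 1 / 4.
Proof.
intros He Ha Hu HeD.
assert (Hau : Rabs (a * u) < 1 / 2).
{ rewrite Rabs_mult; pose proof (Rabs_pos a); pose proof (Rabs_pos u); nra. }
apply Rabs_def2 in Hau; nra.
Qed.

Lemma pins_chart_of_pins F : pins F -> pins_chart F.
Proof.
intros [eps [Heps Hp]].
destruct (bounded_on_list cdelta F) as [D [HD HDF]].
set (e := Rmin (eps / 2) (1 / (4 * (1 + D)))).
assert (He : 0 < e) by (unfold e; apply Rmin_pos; [lra|apply Rdiv_lt_0_compat; lra]).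
assert (He1 : e <= eps / 2) by apply Rmin_l.
assert (He2 : e * (4 * (1 + D)) <= 1).
{ assert (e <= 1 / (4 * (1 + D))) by apply Rmin_r.
  apply (Rmult_le_compat_r (4 * (1 + D))) in H; [|lra].
  now replace (1 / (4 * (1 + D)) * (4 * (1 + D))) with 1 in H by (field; lra). }
exists e; split; [exact He|]; intros x0 y0 x1 y1 h0 h1 h2 h3 Hall.
assert (Hu : Rabs (x1 - x0) < 2 * e).
{ apply Rabs_def2 in h0; apply Rabs_def2 in h2; apply Rabs_def1; lra. }
assert (Hv : Rabs (y1 - y0) < 2 * e).
{ apply Rabs_def2 in h1; apply Rabs_def2 in h3; apply Rabs_def1; lra. }
apply same_oline_l0_chart, Hp; simpl; try lra; try (rewrite Rabs_R0; lra).
- replace (1 - 1) with 0 by ring; rewrite Rabs_R0; lra.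
- intros g Hg; apply side_satisfies; [|rewrite side_chart; auto].
  apply cross_dir_nonzero.
  pose proof (small_product _ _ _ _ He (HDF g Hg) Hu He2).
  pose proof (small_product _ _ _ _ He (HDF g Hg) Hv He2); nra.
Qed.

Lemma div_small c z e : 0 < e -> Rabs c < e -> 1 / 2 < z -> Rabs (c / z) < 2 * e.
Proof.
intros He Hc Hz; apply Rabs_def2 in Hc.
assert (E : c / z * z = c) by (field; lra).
apply Rabs_def1; apply (Rmult_lt_reg_r z); nra.
Qed.

Lemma chart_coords_small p d e : 0 < e <= 1 / 2 ->
  Rabs (vx p) < e -> Rabs (vy p) < e -> Rabs (vz p) < e ->
  Rabs (vx d) < e -> Rabs (vy d) < e -> Rabs (vz d - 1) < e ->
  Rabs (chart_x0 p d) < 2 * e /\ Rabs (chart_y0 p d) < 2 * e /\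
  Rabs (chart_x1 p d) < 4 * e /\ Rabs (chart_y1 p d) < 4 * e.
Proof.
intros He hpx hpy hpz hdx hdy hdz.
assert (Hz : 1 / 2 < vz d) by (apply Rabs_def2 in hdz; lra).
assert (Hx := div_small _ _ _ (proj1 He) hdx Hz); assert (Hy := div_small _ _ _ (proj1 He) hdy Hz).
unfold chart_x1, chart_y1, chart_x0, chart_y0.
replace (vz p * vx d / vz d) with (vz p * (vx d / vz d)) by (field; lra).
replace (vz p * vy d / vz d) with (vz p * (vy d / vz d)) by (field; lra).
apply Rabs_def2 in hpx; apply Rabs_def2 in hpy; apply Rabs_def2 in hpz.
apply Rabs_def2 in Hx; apply Rabs_def2 in Hy.
repeat split; apply Rabs_def1; nra.
Qed.

Lemma same_oline_l0_of_chart p d : 0 < vz d ->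
  chart_x0 p d = 0 -> chart_y0 p d = 0 -> chart_x1 p d = 0 -> chart_y1 p d = 0 ->
  same_oline (OLine p d) l0.
Proof.
intros Hz E0 E1 E2 E3; unfold chart_x1, chart_y1 in E2, E3; rewrite E0 in E2; rewrite E1 in E3.
assert (Edx : vx d = 0).
{ assert (Q : vx d / vz d = 0) by lra.
  replace (vx d) with (vx d / vz d * vz d) by (field; lra); rewrite Q; ring. }
assert (Edy : vy d = 0).
{ assert (Q : vy d / vz d = 0) by lra.
  replace (vy d) with (vy d / vz d * vz d) by (field; lra); rewrite Q; ring. }
unfold chart_x0, chart_y0 in E0, E1; rewrite Edx in E0; rewrite Edy in E1.
destruct p as [px py pz], d as [dx dy dz]; simpl in *; subst.
replace px with 0 by (rewrite <- E0; field; lra); replace py with 0 by (rewrite <- E1; field; lra).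
split; [exists (1 / dz); split; [apply Rdiv_lt_0_compat; lra|]|exists (- pz / dz)];
  unfold vscale, vadd; simpl; f_equal; field; lra.
Qed.

Lemma pins_of_pins_chart F : pins_chart F -> pins F.
Proof.
intros [eps [Heps Hp]].
set (e := Rmin (1 / 2) (eps / 4)).
assert (He : 0 < e <= 1 / 2) by (unfold e; split; [apply Rmin_pos; lra|apply Rmin_l]).
assert (He2 : e <= eps / 4) by apply Rmin_r.
exists e; split; [lra|]; intros p d hp1 hp2 hp3 hd1 hd2 hd3 Hall.
assert (Hz : 1 / 2 < vz d) by (apply Rabs_def2 in hd3; lra).
destruct (chart_coords_small p d e He hp1 hp2 hp3 hd1 hd2 hd3) as (c0 & c1 & c2 & c3).
destruct (Hp (chart_x0 p d) (chart_y0 p d) (chart_x1 p d) (chart_y1 p d)) as (E0 & E1 & E2 & E3);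
  try lra.
- intros g Hg; assert (HT := satisfies_side p d g (Hall g Hg)).
  rewrite side_chart_coords in HT by lra; nra.
- now apply same_oline_l0_of_chart; try lra.
Qed.

Lemma pins_chartE F : pins F <-> pins_chart F.
Proof. split; [apply pins_chart_of_pins|apply pins_of_pins_chart]. Qed.

(** * Orthogonalized constraints *)

Lemma cform_orth g x0 y0 x1 y1 : cform (orth g) x0 y0 x1 y1 = lform g x0 y0 x1 y1.
Proof. destruct g as [[l a] e]; unfold cform, lform, dot4, orth, normal, cdelta; simpl; ring. Qed.

Lemma lform_scale g k x0 y0 x1 y1 :
  lform g (k * x0) (k * y0) (k * x1) (k * y1) = k * lform g x0 y0 x1 y1.
Proof. destruct g as [[l a] e]; unfold lform, dot4, normal; ring. Qed.

Lemma qform_scale k x0 y0 x1 y1 :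
  qform (k * x0) (k * y0) (k * x1) (k * y1) = k ^ 2 * qform x0 y0 x1 y1.
Proof. unfold qform; ring. Qed.

Lemma abs_sum_pos x0 y0 x1 y1 : ~ (x0 = 0 /\ y0 = 0 /\ x1 = 0 /\ y1 = 0) ->
  0 < Rabs x0 + Rabs y0 + Rabs x1 + Rabs y1.
Proof.
intros H; pose proof (Rabs_pos x0); pose proof (Rabs_pos y0);
  pose proof (Rabs_pos x1); pose proof (Rabs_pos y1).
destruct (Req_dec x0 0) as [E0|E0]; [|pose proof (Rabs_pos_lt _ E0); lra].
destruct (Req_dec y0 0) as [E1|E1]; [|pose proof (Rabs_pos_lt _ E1); lra].
destruct (Req_dec x1 0) as [E2|E2]; [|pose proof (Rabs_pos_lt _ E2); lra].
destruct (Req_dec y1 0) as [E3|E3]; [|pose proof (Rabs_pos_lt _ E3); lra].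
tauto.
Qed.

Lemma small_multiple x0 y0 x1 y1 eps : 0 < eps -> exists k, 0 < k /\
  Rabs (k * x0) < eps /\ Rabs (k * y0) < eps /\ Rabs (k * x1) < eps /\ Rabs (k * y1) < eps.
Proof.
intros Heps; set (M := Rabs x0 + Rabs y0 + Rabs x1 + Rabs y1).
pose proof (Rabs_pos x0); pose proof (Rabs_pos y0); pose proof (Rabs_pos x1); pose proof (Rabs_pos y1).
exists (eps / (2 * (M + 1))).
assert (Hk : 0 < eps / (2 * (M + 1))) by (apply Rdiv_lt_0_compat; unfold M; lra).
assert (HkM : eps / (2 * (M + 1)) * M < eps).
{ apply (Rmult_lt_reg_r (2 * (M + 1))); [unfold M; lra|].
  replace (eps / (2 * (M + 1)) * M * (2 * (M + 1))) with (eps * M) by (field; unfold M; lra).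
  unfold M in *; nra. }
split; [exact Hk|]; rewrite !Rabs_mult, !(Rabs_pos_eq _ (Rlt_le _ _ Hk)); unfold M in *.
repeat split; nra.
Qed.

Lemma scaled_zero k x0 y0 x1 y1 : 0 < k ->
  k * x0 = 0 /\ k * y0 = 0 /\ k * x1 = 0 /\ k * y1 = 0 -> x0 = 0 /\ y0 = 0 /\ x1 = 0 /\ y1 = 0.
Proof. intros Hk (E0 & E1 & E2 & E3); repeat split; apply (Rmult_eq_reg_l k); lra. Qed.

Lemma pins_chart_orth F : pins_chart (map orth F) <->
  forall x0 y0 x1 y1, ~ (x0 = 0 /\ y0 = 0 /\ x1 = 0 /\ y1 = 0) ->
    exists g, In g F /\ 0 < lform g x0 y0 x1 y1.
Proof.
split.
- intros [eps [Heps Hp]] x0 y0 x1 y1 Hn; apply NNPP; intros Hno; apply Hn.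
  destruct (small_multiple x0 y0 x1 y1 eps Heps) as (k & Hk & h0 & h1 & h2 & h3).
  apply (scaled_zero k); auto; apply Hp; auto.
  intros g' Hg'; apply in_map_iff in Hg'; destruct Hg' as [g [<- Hg]].
  rewrite cform_orth, lform_scale.
  destruct (Rle_dec (lform g x0 y0 x1 y1) 0); [nra|exfalso; apply Hno; exists g; split; auto; lra].
- intros Hpos; exists 1; split; [lra|]; intros x0 y0 x1 y1 _ _ _ _ Hall.
  apply NNPP; intros Hn; destruct (Hpos x0 y0 x1 y1 Hn) as [g [Hg Hl]].
  assert (Hle := Hall (orth g) (in_map _ _ _ Hg)); rewrite cform_orth in Hle; lra.
Qed.

Lemma Rabs_nonpos_eq0 x : Rabs x <= 0 -> x = 0.
Proof. intros H; destruct (Req_dec x 0) as [|Hx]; [auto|pose proof (Rabs_pos_lt _ Hx); lra]. Qed.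

Lemma qform_small x0 y0 x1 y1 eps : Rabs x0 < eps -> Rabs y0 < eps ->
  Rabs (qform x0 y0 x1 y1) <= eps * (Rabs x1 + Rabs y1).
Proof.
intros h0 h1; unfold qform, Rminus; eapply Rle_trans; [apply Rabs_triang|].
rewrite Rabs_Ropp, !Rabs_mult; pose proof (Rabs_pos x1); pose proof (Rabs_pos y1); nra.
Qed.

(* The linear parts dominate c |x| uniformly, while the quadratic perturbation
   is of size |delta| eps |x|, hence negligible on a small enough ball. *)
Lemma pins_chart_of_orth F : pins_chart (map orth F) -> pins_chart F.
Proof.
intros Hp; rewrite pins_chart_orth in Hp.
destruct (LinearForms.forms_coercive (map normal F)) as [c [Hc Hb]].
{ intros x0 y0 x1 y1 Hn; destruct (Hp _ _ _ _ Hn) as [g [Hg Hl]].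
  exists (normal g); split; [apply in_map|]; auto. }
destruct (bounded_on_list cdelta F) as [D [HD HDF]].
set (eps := c / (4 * (D + 1))).
assert (He : 0 < eps) by (unfold eps; apply Rdiv_lt_0_compat; lra).
assert (HDe : D * eps <= c / 4).
{ unfold eps; apply (Rmult_le_reg_r (4 * (D + 1))); [lra|].
  replace (D * (c / (4 * (D + 1))) * (4 * (D + 1))) with (D * c) by (field; lra).
  replace (c / 4 * (4 * (D + 1))) with (c * D + c) by (field; lra); nra. }
exists eps; split; [exact He|]; intros x0 y0 x1 y1 h0 h1 h2 h3 Hall.
destruct (Hb x0 y0 x1 y1) as [a [Ha (b0 & b1 & b2 & b3)]].
apply in_map_iff in Ha; destruct Ha as [g [<- Hg]].
assert (HF := Hall g Hg); unfold cform in HF; fold (lform g x0 y0 x1 y1) in *.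
assert (HdQ : - (cdelta g * qform x0 y0 x1 y1) <= D * (eps * (Rabs x1 + Rabs y1))).
{ eapply Rle_trans; [apply Rle_abs|]; rewrite Rabs_Ropp, Rabs_mult.
  apply Rmult_le_compat; auto using Rabs_pos, qform_small. }
pose proof (Rabs_pos x0); pose proof (Rabs_pos y0); pose proof (Rabs_pos x1); pose proof (Rabs_pos y1).
assert (Hxy1 : Rabs x1 + Rabs y1 = 0) by nra.
assert (Ex1 : x1 = 0) by (apply Rabs_nonpos_eq0; lra).
assert (Ey1 : y1 = 0) by (apply Rabs_nonpos_eq0; lra).
assert (Hq : qform x0 y0 x1 y1 = 0) by (unfold qform; rewrite Ex1, Ey1; ring).
rewrite Hq in HF.
assert (Ex0 : x0 = 0) by (apply Rabs_nonpos_eq0; nra).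
assert (Ey0 : y0 = 0) by (apply Rabs_nonpos_eq0; nra).
auto.
Qed.

(** * Distinct constraint lines *)

(* Constraint parameters modulo the 2 pi-periodicity of alpha. *)
Definition ckey (g : cparams) : R * R * R * R := let '(l, a, e) := g in (l, cos a, sin a, e).

Lemma ckey_same_oline g1 g2 : same_oline (gline g1) (gline g2) -> ckey g1 = ckey g2.
Proof.
destruct g1 as [[l1 a1] e1], g2 as [[l2 a2] e2]; simpl.
intros [[c [Hc Ec]] [t Et]]; apply vec3_eq_coords in Ec; apply vec3_eq_coords in Et.
unfold vscale, vadd in *; simpl in *; destruct Ec as (c1 & c2 & c3), Et as (t1 & t2 & t3).
pose proof (sin2_cos2 a1) as S1; pose proof (sin2_cos2 a2) as S2; unfold Rsqr in S1, S2.
assert (c = 1) by (rewrite c1, c2 in S2; nra); subst c.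
assert (t = 0) by nra; subst t.
f_equal; [f_equal; [f_equal|]|]; lra.
Qed.

Lemma lform_ckey g g' x0 y0 x1 y1 : ckey g = ckey g' -> lform g x0 y0 x1 y1 = lform g' x0 y0 x1 y1.
Proof.
destruct g as [[l a] e], g' as [[l' a'] e']; simpl; intros E; injection E; intros E4 E3 E2 E1.
unfold lform, dot4, normal; now rewrite E1, E2, E3.
Qed.

Lemma cdelta_ckey g g' : ckey g = ckey g' -> cdelta g = cdelta g'.
Proof. destruct g as [[l a] e], g' as [[l' a'] e']; simpl; intros E; now injection E. Qed.

Definition distinct4 (a b c d : cparams) : Prop :=
  ckey a <> ckey b /\ ckey a <> ckey c /\ ckey a <> ckey d /\
  ckey b <> ckey c /\ ckey b <> ckey d /\ ckey c <> ckey d.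

Definition covered3 (t a1 a2 a3 : cparams) : Prop :=
  ckey t = ckey a1 \/ ckey t = ckey a2 \/ ckey t = ckey a3.

Definition covered4 (t h1 h2 h3 h4 : cparams) : Prop :=
  ckey t = ckey h1 \/ ckey t = ckey h2 \/ ckey t = ckey h3 \/ ckey t = ckey h4.

Lemma four_keys_or_covered (P : cparams -> Prop) :
  (exists a1 a2 a3 a4, P a1 /\ P a2 /\ P a3 /\ P a4 /\ distinct4 a1 a2 a3 a4) \/
  (forall t, ~ P t) \/
  (exists a1 a2 a3, P a1 /\ P a2 /\ P a3 /\ forall t, P t -> covered3 t a1 a2 a3).
Proof.
unfold covered3.
destruct (classic (exists t, P t)) as [[a1 H1]|H]; [|right; left; intros t Ht; apply H; eauto].
destruct (classic (exists t, P t /\ ckey t <> ckey a1)) as [[a2 [H2 N2]]|Hn1].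
2:{ right; right; exists a1, a1, a1; repeat split; auto; intros t Ht.
    left; apply NNPP; intros C; apply Hn1; eauto. }
destruct (classic (exists t, P t /\ ckey t <> ckey a1 /\ ckey t <> ckey a2))
  as [[a3 [H3 [N31 N32]]]|Hn2].
2:{ right; right; exists a1, a2, a2; repeat split; auto; intros t Ht.
    destruct (classic (ckey t = ckey a1)); auto; right; left.
    apply NNPP; intros C; apply Hn2; eauto. }
destruct (classic (exists t, P t /\ ckey t <> ckey a1 /\ ckey t <> ckey a2 /\ ckey t <> ckey a3))
  as [[a4 [H4 [N41 [N42 N43]]]]|Hn3].
2:{ right; right; exists a1, a2, a3; repeat split; auto; intros t Ht.
    destruct (classic (ckey t = ckey a1)); auto; destruct (classic (ckey t = ckey a2)); auto.
    right; right; apply NNPP; intros C; apply Hn3; eauto 10. }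
left; exists a1, a2, a3, a4; unfold distinct4; repeat split; auto.
Qed.

(* Exchange argument: insert a1, a2, a3 one at a time into a key-distinct
   quadruple, each time replacing an element not yet inserted. *)
Lemma covering_distinct4 (P : cparams -> Prop) (g1 g2 g3 g4 a1 a2 a3 : cparams) :
  P g1 -> P g2 -> P g3 -> P g4 -> P a1 -> P a2 -> P a3 -> distinct4 g1 g2 g3 g4 ->
  exists h1 h2 h3 h4, P h1 /\ P h2 /\ P h3 /\ P h4 /\ distinct4 h1 h2 h3 h4 /\
    (forall t, covered3 t a1 a2 a3 -> covered4 t h1 h2 h3 h4).
Proof.
intros P1 P2 P3 P4 Q1 Q2 Q3 D; unfold covered3, covered4.
assert (S1 : exists h2 h3 h4, P h2 /\ P h3 /\ P h4 /\ distinct4 a1 h2 h3 h4).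
{ unfold distinct4 in *; decompose [and] D.
  destruct (classic (ckey a1 = ckey g1)).
  { exists g2, g3, g4; repeat split; auto; congruence. }
  destruct (classic (ckey a1 = ckey g2)).
  { exists g1, g3, g4; repeat split; auto; congruence. }
  destruct (classic (ckey a1 = ckey g3)).
  { exists g1, g2, g4; repeat split; auto; congruence. }
  exists g1, g2, g3; repeat split; auto; congruence. }
destruct S1 as (h2 & h3 & h4 & R2 & R3 & R4 & D1).
assert (S2 : exists k2 k3 k4, P k2 /\ P k3 /\ P k4 /\ distinct4 a1 k2 k3 k4 /\
   (ckey a2 = ckey a1 \/ ckey a2 = ckey k2)).
{ unfold distinct4 in *; decompose [and] D1.
  destruct (classic (ckey a2 = ckey a1 \/ ckey a2 = ckey h2)).
  { exists h2, h3, h4; repeat split; auto. }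
  destruct (classic (ckey a2 = ckey h3)).
  { exists a2, h2, h4; repeat split; auto; try congruence; intro; congruence. }
  exists a2, h2, h3; repeat split; auto; try congruence; intro; congruence. }
destruct S2 as (k2 & k3 & k4 & R2' & R3' & R4' & D2 & E2).
assert (S3 : exists m3 m4, P m3 /\ P m4 /\ distinct4 a1 k2 m3 m4 /\
   (ckey a3 = ckey a1 \/ ckey a3 = ckey k2 \/ ckey a3 = ckey m3)).
{ unfold distinct4 in *; decompose [and] D2.
  destruct (classic (ckey a3 = ckey a1 \/ ckey a3 = ckey k2 \/ ckey a3 = ckey k3)).
  { exists k3, k4; repeat split; auto. }
  destruct (classic (ckey a3 = ckey k4)).
  { exists a3, k3; repeat split; auto; try congruence; try tauto; intro; congruence. }
  exists a3, k4; repeat split; auto; try congruence; try tauto; intro; congruence. }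
destruct S3 as (m3 & m4 & R3'' & R4'' & D3 & E3).
exists a1, k2, m3, m4; do 4 (split; [auto|]); split; [exact D3|].
intros t [Ht|[Ht|Ht]]; rewrite Ht; tauto.
Qed.

(** * Families that do not pin l0 *)

Lemma not_pins_chart_ray F x0 y0 x1 y1 : ~ (x0 = 0 /\ y0 = 0 /\ x1 = 0 /\ y1 = 0) ->
  qform x0 y0 x1 y1 = 0 -> (forall g, In g F -> lform g x0 y0 x1 y1 <= 0) -> ~ pins_chart F.
Proof.
intros Hn HQ HL [eps [Heps Hp]]; apply Hn.
destruct (small_multiple x0 y0 x1 y1 eps Heps) as (k & Hk & h0 & h1 & h2 & h3).
apply (scaled_zero k); auto; apply Hp; auto.
intros g Hg; unfold cform; fold (lform g (k * x0) (k * y0) (k * x1) (k * y1)).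
rewrite lform_scale, qform_scale, HQ; specialize (HL g Hg); nra.
Qed.

Lemma two_halfplanes_common_ray A2 B2 A3 B3 :
  exists s t, ~ (s = 0 /\ t = 0) /\ A2 * s + B2 * t <= 0 /\ A3 * s + B3 * t <= 0.
Proof.
destruct (classic (A2 = 0 /\ B2 = 0)) as [[-> ->]|H].
- destruct (classic (A3 = 0 /\ B3 = 0)) as [[-> ->]|H3].
  + exists 1, 0; split; [intros [h _]; lra|lra].
  + exists (- A3), (- B3); split; [intros [h1 h2]; apply H3; lra|split; nra].
- destruct (Rle_dec (A3 * B2 - B3 * A2) 0).
  + exists B2, (- A2); split; [intros [h1 h2]; apply H; lra|split; nra].
  + exists (- B2), A2; split; [intros [h1 h2]; apply H; lra|split; nra].
Qed.

(* Take both points in direction (cos alpha1, sin alpha1): then qform vanishes,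
   the first constraint is tight, and the other two are linear in (s, t). *)
Lemma three_constraints_ray a1 a2 a3 : exists x0 y0 x1 y1,
  ~ (x0 = 0 /\ y0 = 0 /\ x1 = 0 /\ y1 = 0) /\ qform x0 y0 x1 y1 = 0 /\
  lform a1 x0 y0 x1 y1 <= 0 /\ lform a2 x0 y0 x1 y1 <= 0 /\ lform a3 x0 y0 x1 y1 <= 0.
Proof.
destruct a1 as [[l1 al1] e1], a2 as [[l2 al2] e2], a3 as [[l3 al3] e3].
set (c := cos al1); set (s1 := sin al1).
set (sg2 := c * sin al2 - s1 * cos al2); set (sg3 := c * sin al3 - s1 * cos al3).
destruct (two_halfplanes_common_ray (sg2 * (1 - l2)) (sg2 * l2) (sg3 * (1 - l3)) (sg3 * l3))
  as [s [t [Hst [H2 H3]]]].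
exists (s * c), (s * s1), (t * c), (t * s1).
pose proof (sin2_cos2 al1) as S; unfold Rsqr in S; fold c s1 in S.
unfold qform, lform, dot4, normal; fold c s1; unfold sg2, sg3 in *.
repeat split; [intros (h1 & h2 & h3 & h4); apply Hst; split; nra|ring|nra|nra|nra].
Qed.

Lemma few_keys_not_pins_chart F a1 a2 a3 :
  (forall g, In g F -> covered3 g a1 a2 a3) -> ~ pins_chart F.
Proof.
intros Hc; destruct (three_constraints_ray a1 a2 a3) as (x0 & y0 & x1 & y1 & Hn & HQ & L1 & L2 & L3).
apply (not_pins_chart_ray F x0 y0 x1 y1 Hn HQ); intros g Hg.
destruct (Hc g Hg) as [E|[E|E]]; rewrite (lform_ckey g _ _ _ _ _ E); auto.
Qed.

Lemma shrink_le t x M : 0 < t <= 1 -> 0 <= M -> x <= M -> t * x <= M.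
Proof. intros Ht HM Hx; destruct (Rle_dec 0 x); nra. Qed.

Lemma horner_eventually_nonpos a b c d : a < 0 ->
  exists tau, 0 < tau /\ forall t, 0 < t <= tau -> a + t * (b + t * (c + t * d)) <= 0.
Proof.
intros Ha; set (K := Rabs b + Rabs c + Rabs d).
pose proof (Rabs_pos b); pose proof (Rabs_pos c); pose proof (Rabs_pos d).
exists (Rmin 1 (- a / (K + 1))); split; [apply Rmin_pos; [lra|apply Rdiv_lt_0_compat; unfold K; lra]|].
intros t [Ht0 Ht].
assert (Ht1 : t <= 1) by (eapply Rle_trans; [exact Ht|apply Rmin_l]).
assert (HtK : t * (K + 1) <= - a).
{ assert (Hta : t <= - a / (K + 1)) by (eapply Rle_trans; [exact Ht|apply Rmin_r]).
  apply (Rmult_le_compat_r (K + 1)) in Hta; [|unfold K; lra].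
  now replace (- a / (K + 1) * (K + 1)) with (- a) in Hta by (field; unfold K; lra). }
assert (Hd : t * d <= Rabs d) by (apply shrink_le; auto using Rabs_pos, Rle_abs).
assert (Hcd : t * (c + t * d) <= Rabs c + Rabs d).
{ pose proof (Rle_abs c); apply shrink_le; auto; lra. }
assert (Hbcd : b + t * (c + t * d) <= K) by (pose proof (Rle_abs b); unfold K; lra).
assert (Ha' : t * (b + t * (c + t * d)) <= t * K) by (apply Rmult_le_compat_l; lra).
unfold K in *; nra.
Qed.

Lemma quartic_eventually_nonpos L P1 P2 P3 : L <= 0 -> (L = 0 -> P1 < 0) ->
  exists tau, 0 < tau /\ forall t, 0 < t <= tau -> t * L + t^2 * P1 + t^3 * P2 + t^4 * P3 <= 0.
Proof.
intros HL H0; destruct (Req_dec L 0) as [E|E].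
- destruct (horner_eventually_nonpos P1 P2 P3 0 (H0 E)) as [tau [Htau H]].
  exists tau; split; auto; intros t Ht; specialize (H t Ht); subst L.
  replace (t * 0 + t ^ 2 * P1 + t ^ 3 * P2 + t ^ 4 * P3)
    with (t ^ 2 * (P1 + t * (P2 + t * (P3 + t * 0)))) by ring.
  assert (0 < t ^ 2) by (simpl; nra); nra.
- destruct (horner_eventually_nonpos L P1 P2 P3 ltac:(lra)) as [tau [Htau H]].
  exists tau; split; auto; intros t Ht; specialize (H t Ht).
  replace (t * L + t ^ 2 * P1 + t ^ 3 * P2 + t ^ 4 * P3)
    with (t * (L + t * (P1 + t * (P2 + t * P3)))) by ring; nra.
Qed.

Lemma eventually_forall_in {A : Type} (P : A -> R -> Prop) (l : list A) :
  (forall a, In a l -> exists tau, 0 < tau /\ forall t, 0 < t <= tau -> P a t) ->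
  exists tau, 0 < tau /\ forall a, In a l -> forall t, 0 < t <= tau -> P a t.
Proof.
induction l as [|a l IH]; intros H; [exists 1; split; [lra|intros a []]|].
destruct (H a (or_introl eq_refl)) as [t1 [Ht1 H1]].
destruct IH as [t2 [Ht2 H2]]; [intros b Hb; apply H; right; auto|].
exists (Rmin t1 t2); split; [apply Rmin_pos; auto|].
pose proof (Rmin_l t1 t2); pose proof (Rmin_r t1 t2).
intros b [<-|Hb] t Ht; [apply H1|apply H2; auto]; lra.
Qed.

Lemma cform_curve g t x0 y0 x1 y1 z0 w0 z1 w1 :
  cform g (t * x0 + t^2 * z0) (t * y0 + t^2 * w0) (t * x1 + t^2 * z1) (t * y1 + t^2 * w1) =
  t * lform g x0 y0 x1 y1 + t^2 * (lform g z0 w0 z1 w1 + cdelta g * qform x0 y0 x1 y1) +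
  t^3 * (cdelta g * (y0 * z1 + w0 * x1 - x0 * w1 - z0 * y1)) + t^4 * (cdelta g * qform z0 w0 z1 w1).
Proof. destruct g as [[l a] e]; unfold cform, lform, qform, dot4, normal, cdelta; ring. Qed.

Lemma curve_coord_small x z t M N eps : 0 < t <= 1 -> Rabs x <= M -> Rabs z <= N ->
  t * (M + N) < eps -> Rabs (t * x + t ^ 2 * z) < eps.
Proof.
intros [h1 h2] hx hz he; eapply Rle_lt_trans; [apply Rabs_triang|].
rewrite !Rabs_mult, (Rabs_pos_eq t), (Rabs_pos_eq (t ^ 2)) by (simpl; nra).
pose proof (Rabs_pos z); assert (t ^ 2 <= t) by (simpl; nra); nra.
Qed.

Lemma curve_point_small x0 y0 x1 y1 z0 w0 z1 w1 eps tau :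
  ~ (x0 = 0 /\ y0 = 0 /\ x1 = 0 /\ y1 = 0) -> 0 < eps -> 0 < tau -> exists t, 0 < t <= tau /\
  Rabs (t * x0 + t^2 * z0) < eps /\ Rabs (t * y0 + t^2 * w0) < eps /\
  Rabs (t * x1 + t^2 * z1) < eps /\ Rabs (t * y1 + t^2 * w1) < eps /\
  ~ (t * x0 + t^2 * z0 = 0 /\ t * y0 + t^2 * w0 = 0 /\ t * x1 + t^2 * z1 = 0 /\ t * y1 + t^2 * w1 = 0).
Proof.
intros Hn Heps Htau; pose proof (abs_sum_pos _ _ _ _ Hn) as HM.
set (M := Rabs x0 + Rabs y0 + Rabs x1 + Rabs y1) in *.
set (N := Rabs z0 + Rabs w0 + Rabs z1 + Rabs w1).
pose proof (Rabs_pos x0); pose proof (Rabs_pos y0); pose proof (Rabs_pos x1); pose proof (Rabs_pos y1).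
pose proof (Rabs_pos z0); pose proof (Rabs_pos w0); pose proof (Rabs_pos z1); pose proof (Rabs_pos w1).
assert (HN : 0 <= N) by (unfold N; lra).
set (t := Rmin (Rmin tau 1) (Rmin (eps / (2 * (M + N + 1))) (M / (2 * (N + 1))))).
assert (Ht0 : 0 < t) by (unfold t; repeat apply Rmin_pos; auto; try lra; apply Rdiv_lt_0_compat; lra).
assert (Ht1 : t <= Rmin tau 1) by apply Rmin_l.
assert (Ht2 : t <= Rmin (eps / (2 * (M + N + 1))) (M / (2 * (N + 1)))) by apply Rmin_r.
pose proof (Rmin_l tau 1); pose proof (Rmin_r tau 1).
pose proof (Rmin_l (eps / (2 * (M + N + 1))) (M / (2 * (N + 1)))).
pose proof (Rmin_r (eps / (2 * (M + N + 1))) (M / (2 * (N + 1)))).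
assert (Hte : t * (M + N) < eps).
{ assert (E : eps / (2 * (M + N + 1)) * (2 * (M + N + 1)) = eps) by (field; lra).
  assert (t * (2 * (M + N + 1)) <= eps) by (rewrite <- E; apply Rmult_le_compat_r; lra); nra. }
assert (HtN : t * N < M).
{ assert (E : M / (2 * (N + 1)) * (2 * (N + 1)) = M) by (field; lra).
  assert (t * (2 * (N + 1)) <= M) by (rewrite <- E; apply Rmult_le_compat_r; lra); nra. }
exists t; split; [lra|].
repeat split; try (apply (curve_coord_small _ _ _ M N); auto; unfold M, N in *; lra).
(* if the curve point were 0 we would have |v| = t |w| *)
assert (K : forall x z, t * x + t ^ 2 * z = 0 -> Rabs x = t * Rabs z).
{ intros x z Hxz; replace x with (- (t * z)) by (apply (Rmult_eq_reg_l t); simpl in Hxz; nra).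
  rewrite Rabs_Ropp, Rabs_mult, Rabs_pos_eq; lra. }
intros (e0 & e1 & e2 & e3); apply K in e0; apply K in e1; apply K in e2; apply K in e3.
unfold M, N in *; lra.
Qed.

Lemma not_pins_chart_curve F x0 y0 x1 y1 z0 w0 z1 w1 :
  ~ (x0 = 0 /\ y0 = 0 /\ x1 = 0 /\ y1 = 0) ->
  (forall g, In g F -> lform g x0 y0 x1 y1 <= 0 /\
     (lform g x0 y0 x1 y1 = 0 -> lform g z0 w0 z1 w1 + cdelta g * qform x0 y0 x1 y1 < 0)) ->
  ~ pins_chart F.
Proof.
intros Hn HF [eps [Heps Hp]].
destruct (eventually_forall_in (fun g t => cform g (t * x0 + t^2 * z0) (t * y0 + t^2 * w0)
  (t * x1 + t^2 * z1) (t * y1 + t^2 * w1) <= 0) F) as [tau [Htau Hu]].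
{ intros g Hg; destruct (HF g Hg) as [h1 h2].
  destruct (quartic_eventually_nonpos _ _ (cdelta g * (y0 * z1 + w0 * x1 - x0 * w1 - z0 * y1))
    (cdelta g * qform z0 w0 z1 w1) h1 h2) as [tau [Ht H]].
  exists tau; split; auto; intros t Ht'; rewrite cform_curve; apply H; auto. }
destruct (curve_point_small x0 y0 x1 y1 z0 w0 z1 w1 eps tau Hn Heps Htau)
  as (t & Ht & h0 & h1 & h2 & h3 & Hnz).
apply Hnz, Hp; auto; intros g Hg; apply Hu; auto; lra.
Qed.

(** * Dependence-free families *)

Lemma distinct4_indep F h1 h2 h3 h4 : no_four_dependent F ->
  In h1 F -> In h2 F -> In h3 F -> In h4 F -> distinct4 h1 h2 h3 h4 ->
  indep4 (normal h1) (normal h2) (normal h3) (normal h4).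
Proof.
intros Hnf i1 i2 i3 i4 D; unfold distinct4 in D.
apply Hnf; auto; intro S; apply ckey_same_oline in S; tauto.
Qed.

(* The constraints tight at v have at most three keys (v would vanish
   otherwise); completed to four key-distinct constraints of F, their
   normals are independent, so the second-order system is solvable. *)
Lemma tight_system_solvable F g1 g2 g3 g4 x0 y0 x1 y1 : no_four_dependent F ->
  In g1 F -> In g2 F -> In g3 F -> In g4 F -> distinct4 g1 g2 g3 g4 ->
  ~ (x0 = 0 /\ y0 = 0 /\ x1 = 0 /\ y1 = 0) -> exists z0 w0 z1 w1, forall g, In g F ->
    lform g x0 y0 x1 y1 = 0 -> lform g z0 w0 z1 w1 + cdelta g * qform x0 y0 x1 y1 = -1.
Proof.
intros Hnf G1 G2 G3 G4 DG Hn.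
destruct (four_keys_or_covered (fun t => In t F /\ lform t x0 y0 x1 y1 = 0)) as
  [(a1 & a2 & a3 & a4 & [A1 L1] & [A2 L2] & [A3 L3] & [A4 L4] & DA)
  |[Hemp|(a1 & a2 & a3 & [A1 _] & [A2 _] & [A3 _] & Ac)]].
- exfalso; apply Hn.
  exact (LinearForms.indep4_injective _ _ _ _ _ _ _ _ (distinct4_indep F a1 a2 a3 a4 Hnf A1 A2 A3 A4 DA)
    L1 L2 L3 L4).
- exists 0, 0, 0, 0; intros g Hg HL0; exfalso; apply (Hemp g); auto.
- destruct (covering_distinct4 (fun t => In t F) g1 g2 g3 g4 a1 a2 a3 G1 G2 G3 G4 A1 A2 A3 DG)
    as (h1 & h2 & h3 & h4 & H1 & H2 & H3 & H4 & DH & Hc).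
  set (r h := - cdelta h * qform x0 y0 x1 y1 - 1).
  destruct (LinearForms.indep4_surjective _ _ _ _ (distinct4_indep F h1 h2 h3 h4 Hnf H1 H2 H3 H4 DH)
    (r h1) (r h2) (r h3) (r h4)) as (z0 & w0 & z1 & w1 & S1 & S2 & S3 & S4).
  exists z0, w0, z1, w1; intros g Hg HL0.
  destruct (Hc g (Ac g (conj Hg HL0))) as [E|[E|[E|E]]];
    rewrite (lform_ckey g _ _ _ _ _ E), (cdelta_ckey g _ E); unfold lform;
    [rewrite S1|rewrite S2|rewrite S3|rewrite S4]; unfold r; ring.
Qed.

Lemma pins_chart_orth_of_pins_chart F :
  pins_chart F -> no_four_dependent F -> pins_chart (map orth F).
Proof.
intros Hp Hnf; apply NNPP; intros Hno.
assert (HX : exists x0 y0 x1 y1, ~ (x0 = 0 /\ y0 = 0 /\ x1 = 0 /\ y1 = 0) /\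
  forall g, In g F -> lform g x0 y0 x1 y1 <= 0).
{ apply NNPP; intros C; apply Hno, pins_chart_orth; intros x0 y0 x1 y1 Hn.
  apply NNPP; intros C'; apply C; exists x0, y0, x1, y1; split; auto.
  intros g Hg; apply Rnot_lt_le; intros Hlt; apply C'; eauto. }
destruct HX as (x0 & y0 & x1 & y1 & Hn & HL).
destruct (four_keys_or_covered (fun t => In t F)) as
  [(g1 & g2 & g3 & g4 & G1 & G2 & G3 & G4 & DG)|[Hemp|(a1 & a2 & a3 & _ & _ & _ & Hc)]].
- destruct (tight_system_solvable F g1 g2 g3 g4 x0 y0 x1 y1 Hnf G1 G2 G3 G4 DG Hn)
    as (z0 & w0 & z1 & w1 & Hw).
  apply (not_pins_chart_curve F x0 y0 x1 y1 z0 w0 z1 w1 Hn); [|exact Hp].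
  intros g Hg; split; auto; intros E; rewrite (Hw g Hg E); lra.
- apply (few_keys_not_pins_chart F (0, 0, 0) (0, 0, 0) (0, 0, 0)); auto.
  intros g Hg; exfalso; apply (Hemp g Hg).
- exact (few_keys_not_pins_chart F a1 a2 a3 Hc Hp).
Qed.

Theorem lemma25 (F : list cparams) :
  (pins (map orth F) -> pins F) /\
  (pins F -> no_four_dependent F -> pins (map orth F)).
Proof.
rewrite !pins_chartE; split.
- apply pins_chart_of_orth.
- apply pins_chart_orth_of_pins_chart.
Qed.
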